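(* Let $(V,E^+\uplus E^-)$ be a Correlation Clustering instance with optimum cost $\mathrm{opt}$, let $\mathcal C$ be a clustering of $V$ with $\mathrm{obj}(\mathcal C)\le3\,\mathrm{opt}$, let $\beta=0.1$, and let $\mathcal K$ be the partition of $V$ constructed from $\mathcal C$ as described in the context. Then for every non-singleton atom $K\in\mathcal K$ and every $u\in K$, $|N^+_u\triangle K|<\beta|K|$.
   Context: A Correlation Clustering instance consists of a finite vertex set $V$ and a partition $E^+\uplus E^-=\binom V2$ of unordered pairs of distinct vertices into $+$edges and $-$edges. For a clustering (partition) $\mathcal C$ of $V$, $\mathrm{obj}(\mathcal C)$ is the number of $+$edges between different parts plus the number of $-$edges inside parts; $\mathrm{opt}$ is its minimum. By convention every vertex has a $+$ self-loop, so the set $N^+_u$ of $+$neighbours of $u$ contains $u$. $A\triangle B$ denotes symmetric difference. Construction of $\mathcal K$ with $\beta=0.1$: for every non-singleton $C\in\mathcal C$, mark every $u\in C$ with $|N^+_u\triangle C|>\frac\beta2|C|$, and then, if at least $\frac{\beta|C|}{3}$ vertices of $C$ are marked, mark all vertices of $C$. $\mathcal K$ is obtained from $\mathcal C$ by removing every marked vertex from its cluster and making it a singleton cluster. The parts of $\mathcal K$ are called atoms. *)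

From mathcomp Require Import all_boot all_order all_algebra.
Set Implicit Arguments. Unset Strict Implicit. Unset Printing Implicit Defensive.
Import Order.TTheory GRing.Theory Num.Theory.

Section CC.
Variable T : finType.

(* A Correlation Clustering instance on vertex set T is given by the set Ep of
   +edges, each an unordered pair (2-element subset) of T; every other
   2-element subset of T is a -edge. *)
Variable Ep : {set {set T}}.

Definition pairs : {set {set T}} := [set e : {set T} | #|e| == 2].

Definition inside (P : {set {set T}}) (e : {set T}) : bool :=
  [exists C in P, e \subset C].

Definition obj (P : {set {set T}}) : nat :=
  #|[set e in pairs | if e \in Ep then ~~ inside P e else inside P e]|.

(* minimum of obj over all clusterings (partitions of T); the default value
   #|pairs| is an upper bound of every obj, and partitions always exist. *)
Definition opt : nat :=
  \big[minn/#|pairs|]_(P : {set {set T}} | partition P [set: T]) obj P.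

(* +neighbourhood, with the +self-loop convention: u \in Nplus u *)
Definition Nplus (u : T) : {set T} := [set v | (v == u) || ([set u; v] \in Ep)].

Definition symdiff (A B : {set T}) : {set T} := (A :\: B) :|: (B :\: A).

Definition beta : rat := (1 / 10)%R.

Definition marked1 (C : {set T}) (u : T) : bool :=
  [&& 1 < #|C|, u \in C &
      ((beta / 2) * (#|C|%:R) < (#|symdiff (Nplus u) C|%:R))%R].

Definition allmarked (C : {set T}) : bool :=
  (1 < #|C|) && ((beta * (#|C|%:R) / 3) <= (#|[set u in C | marked1 C u]|%:R))%R.

Definition marked (C : {set T}) : {set T} :=
  if allmarked C then C else [set u in C | marked1 C u].

Definition atoms (P : {set {set T}}) : {set {set T}} :=
  [set C :\: marked C | C in [set C in P | C :\: marked C != set0]]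
  :|: [set [set v] | v in \bigcup_(C in P) marked C].

End CC.

From mathcomp Require Import all_boot all_order all_algebra.
From mathcomp Require Import lra.
Import Order.TTheory GRing.Theory Num.Theory.

(* A non-singleton atom K is what remains of a cluster C that was not wholly
   marked, after removing its set M of marked vertices; so #|M| < beta #|C| / 3,
   and each u in K is unmarked, i.e. #|N_u (+) C| <= beta #|C| / 2.  Removing M
   changes N_u (+) C by at most #|M| elements, whence
   #|N_u (+) K| <= (beta/2 + beta/3) #|C| < beta (1 - beta/3) #|C| <= beta #|K|. *)

Section Atoms.
Variables (T : finType) (Ep : {set {set T}}).

Lemma card_symdiffD (A C M : {set T}) :
  #|symdiff A (C :\: M)| <= #|symdiff A C| + #|M|.
Proof.
apply: leq_trans (leq_card_setU _ _); apply: subset_leq_card.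
apply/subsetP=> x; rewrite /symdiff !in_setU !in_setD.
by case: (x \in M); case: (x \in C); case: (x \in A).
Qed.

Lemma card_symdiffD_lt (A C M : {set T}) : M \subset C ->
  (#|symdiff A C|%:R <= beta / 2 * #|C|%:R :> rat)%R ->
  (#|M|%:R < beta * #|C|%:R / 3 :> rat)%R ->
  (#|symdiff A (C :\: M)|%:R < beta * #|C :\: M|%:R :> rat)%R.
Proof.
move=> MC; rewrite cardsD (setIidPr MC) natrB ?subset_leq_card //.
have : (#|symdiff A (C :\: M)|%:R <= #|symdiff A C|%:R + #|M|%:R :> rat)%R.
  by rewrite -natrD ler_nat card_symdiffD.
have : (0 <= #|M|%:R :> rat)%R by rewrite ler0n.
by rewrite /beta; lra.
Qed.

Lemma nontrivial_atom_cluster (P : {set {set T}}) (K : {set T}) :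
  K \in atoms Ep P -> 1 < #|K| ->
  exists C : {set T}, [/\ 1 < #|C|, ~~ allmarked Ep C &
    K = C :\: [set x in C | marked1 Ep C x]].
Proof.
rewrite /atoms inE => /orP[]; last by case/imsetP=> v _ ->; rewrite cards1.
case/imsetP=> C _ -> K1; exists C.
have C1 : 1 < #|C| by apply: leq_trans K1 (subset_leq_card (subsetDl _ _)).
have [all|notall] := boolP (allmarked Ep C).
  by move: K1; rewrite /marked all setDv cards0.
by rewrite /marked (negbTE notall).
Qed.

End Atoms.

Theorem lemma7 (T : finType) (Ep : {set {set T}})
  (HEp : forall e, e \in Ep -> #|e| = 2)
  (P : {set {set T}}) (HP : partition P [set: T])
  (Hobj : obj Ep P <= 3 * opt Ep) :
  forall K, K \in atoms Ep P -> 1 < #|K| ->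
  forall u, u \in K ->
    ((#|symdiff (Nplus Ep u) K|%:R : rat) < beta * (#|K|%:R))%R.
Proof.
move=> K /nontrivial_atom_cluster atomK /atomK[C [C1 notall ->]] u.
rewrite !inE => /andP[unmarked uC].
apply: card_symdiffD_lt.
- by apply/subsetP=> x; rewrite inE => /andP[].
- by move: unmarked; rewrite uC /marked1 C1 uC /= -leNgt.
- by move: notall; rewrite /allmarked C1 /= -ltNge.
Qed.
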